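(* Let $G$ be a finite group and let $X = \{[a,b]^k \mid a,b \in G,\ (|a|,|b|)=1,\ k \in \mathbb{Z}\}$. Assume that for all $x,y \in X$ with $(|x|,|y|)=1$ we have $|xy|=|x|\,|y|$. Let $x \in X$ and let $N$ be a subgroup of $G$ normalized by $x$. If $(|x|,|N|)=1$, then $[x,N]=1$, i.e. $x$ centralizes $N$.
   Context: All groups are finite. $|x|$ denotes the order of an element $x$ and $|N|$ the order of a subgroup $N$. $[a,b]=a^{-1}b^{-1}ab$, and $[x,N]$ is the subgroup generated by all $[x,y]$, $y\in N$. *)

From mathcomp Require Import all_boot all_fingroup.
Set Implicit Arguments. Unset Strict Implicit. Unset Printing Implicit Defensive.
Import GroupScope.

(* The set X = { [a,b]^k | a,b in G, gcd(|a|,|b|) = 1, k in Z } of the paper.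
   mathcomp's commutator [~ a, b] = a^-1 * b^-1 * a * b, matching the paper. *)
Definition coprime_comm_powers (gT : finGroupType) (G : {group gT}) (x : gT) : Prop :=
  exists a b : gT, [/\ a \in G, b \in G, coprime #[a] #[b] &
    exists k : nat, x = [~ a, b] ^+ k \/ x = ([~ a, b] ^+ k)^-1].

From mathcomp Require Import all_boot all_fingroup all_solvable.
Import GroupScope.
Set Implicit Arguments.
Unset Strict Implicit.
Unset Printing Implicit Defensive.

(* Since [x * [~ x, n] = x ^ n] has the same order as [x], the coprime
   commutator [[~ x, n]] lies in X, is coprime to [x] (it lies in [N]), and the
   hypothesis forces [#[x] = #[x] * #[[~ x, n]]], i.e. [[~ x, n] = 1]. *)

Lemma coprime_comm_powers_sub (gT : finGroupType) (G : {group gT}) (x : gT) :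
  coprime_comm_powers G x -> x \in G.
Proof.
by case=> a [b [aG bG _ [k [->|->]]]]; rewrite ?groupV groupX ?groupR.
Qed.

Lemma coprime_comm_powers_commg (gT : finGroupType) (G : {group gT}) (a b : gT) :
  a \in G -> b \in G -> coprime #[a] #[b] -> coprime_comm_powers G [~ a, b].
Proof. by move=> aG bG cop_ab; exists a, b; split=> //; exists 1%N; left. Qed.

Lemma commg1_order_mul (gT : finGroupType) (x n : gT) :
  #[x * [~ x, n]] = (#[x] * #[[~ x, n]])%N -> [~ x, n] = 1.
Proof.
rewrite commgEl mulKVg orderJ -{1}[#[x]]muln1 => /eqP.
by rewrite eqn_pmul2l ?order_gt0 // eq_sym order_eq1 => /eqP.
Qed.

Theorem mainTheorem2 (gT : finGroupType) (G : {group gT})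
  (hX : forall x y : gT, coprime_comm_powers G x -> coprime_comm_powers G y ->
          coprime #[x] #[y] -> #[x * y] = (#[x] * #[y])%N)
  (x : gT) (N : {group gT})
  (hx : coprime_comm_powers G x) (hNG : N \subset G) (hxN : x \in 'N(N))
  (hcop : coprime #[x] #|N|) :
  [~: [set x], N] = 1.
Proof.
apply/commG1P; rewrite sub1set; apply/centP => n nN.
have xG := coprime_comm_powers_sub hx.
have nG : n \in G := subsetP hNG n nN.
have cN : [~ x, n] \in N by rewrite commgEr groupM // memJ_norm // groupV.
have cop_xN m : m \in N -> coprime #[x] #[m].
  by move=> mN; apply: coprime_dvdr (order_dvdG mN) hcop.
have hc := coprime_comm_powers_commg xG nG (cop_xN n nN).
have c1 : [~ x, n] = 1 by apply/commg1_order_mul/hX; rewrite ?cop_xN.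
exact/commgP/eqP.
Qed.
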